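(* Assume (A4) holds at $\bar u_{\bar e}$ and that there is $\sigma>0$ with $\beta+\bar e_\beta-(\alpha+\bar e_\alpha)\ge\sigma$ a.e. on $\Omega$. Take $0<\eta<\sigma/4$. Let $e\in B_\eta(\bar e)$ and let $\bar u_e\in\mathcal U_{ad}(e)$ satisfy the perturbed first-order optimality system, i.e. $\int_\Omega\varphi_{\bar u_e,e}(u-\bar u_e)dx\ge0$ for all $u\in\mathcal U_{ad}(e)$. Then there exist constants $c>0$, $\kappa'>0$ independent of $e$, and a control $u_e\in\mathcal U_{ad}(\bar e)$ with $\|\bar u_e-u_e\|_{L^\infty(\Omega)}\le\|e-\bar e\|_E$, such that $(\mathcal J'_u(\bar u_e,e)-\mathcal J'_u(\bar u_{\bar e},\bar e))(\bar u_{\bar e}-\bar u_e)\ge\kappa'\|\bar u_e-\bar u_{\bar e}\|_{L^1(\Omega)}^{1+1/\varkappa}+\frac12\mathcal J'_u(\bar u_{\bar e},\bar e)(u_e-\bar u_{\bar e})-c\big(\|e-\bar e\|_E^{1/\varkappa}+\|\varphi_{\bar u_e,e}-\varphi_{\bar u_{\bar e},\bar e}\|_{L^\infty(\Omega)}+\|\bar u_e-\bar u_{\bar e}\|_{L^1(\Omega)}\big)\|e-\bar e\|_E$.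
   Context: Let $\Omega\subset\mathbb R^N$, $N\in\{1,2,3\}$, be an open bounded domain with Lipschitz boundary $\Gamma$; $\alpha,\beta\in L^\infty(\Omega)$, $\alpha\le\beta$. $Ay=-\sum_{i,j}\partial_{x_j}(a_{ij}\partial_{x_i}y)$, $a_{ij}\in C(\bar\Omega)$ uniformly elliptic. $L,f$ Carathéodory, $C^2$ in $y$, satisfying (A1) $f(\cdot,0)\in L^{\bar p}$, $\bar p>N/2$, $\partial f/\partial y\ge0$, $|\partial f/\partial y|+|\partial^2f/\partial y^2|\le C_{f,M}$ for $|y|\le M$, $\partial^2f/\partial y^2(x,\cdot)$ uniformly continuous on $[-M,M]$ uniformly in $x$; (A2) $L(\cdot,0)\in L^1$, $|\partial L/\partial y|\le\psi_M\in L^{\bar p}$, $|\partial^2L/\partial y^2|\le C_{L,M}$ for $|y|\le M$, $\partial^2L/\partial y^2(x,\cdot)$ uniformly continuous likewise. $y_u$ solves $Ay+f(x,y)=u$, $y=0$ on $\Gamma$; $J(u)=\int_\Omega L(x,y_u)dx$. $E=L^2(\Omega)^2\times L^\infty(\Omega)^2$, $e=(e_y,e_J,e_\alpha,e_\beta)$ with the sum norm; $\mathcal U_{ad}(e)=\{u\in L^1:\alpha+e_\alpha\le u\le\beta+e_\beta\text{ a.e.}\}$; $\mathcal J(u,e)=J(u+e_y)+(e_J,y_{u+e_y})_{L^2}$. $\varphi_{u,e}$ solves $A^*\varphi+\frac{\partial f}{\partial y}(x,y_{u+e_y})\varphi=\frac{\partial L}{\partial y}(x,y_{u+e_y})+e_J$,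 $\varphi=0$ on $\Gamma$, so that $\mathcal J'_u(u,e)v=\int_\Omega\varphi_{u,e}v\,dx$. (A4) at $\bar u_{\bar e}$: $\bar u_{\bar e}\in\mathcal U_{ad}(\bar e)$, with adjoint state $\varphi_{\bar u_{\bar e}}$ (solution of $A^*\varphi+\frac{\partial f}{\partial y}(x,y_{\bar u_{\bar e}})\varphi=\frac{\partial L}{\partial y}(x,y_{\bar u_{\bar e}})$, $\varphi=0$ on $\Gamma$), satisfies $\int_\Omega\varphi_{\bar u_{\bar e}}(u-\bar u_{\bar e})\ge0$ for all $u\in\mathcal U_{ad}(\bar e)$ and there are $K,\varkappa>0$ with $|\{x:|\varphi_{\bar u_{\bar e}}(x)|\le\varepsilon\}|\le K\varepsilon^\varkappa$ for all $\varepsilon>0$. *)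

From HB Require Import structures.
From mathcomp Require Import all_boot all_order all_algebra.
From mathcomp Require Import all_classical all_reals all_analysis.
Set Implicit Arguments. Unset Strict Implicit. Unset Printing Implicit Defensive.
Import Order.TTheory GRing.Theory Num.Theory.
Import numFieldNormedType.Exports.
Local Open Scope classical_set_scope.
Local Open Scope ring_scope.

Section Defs.
Context (d : measure_display) (T : measurableType d) (R : realType)
  (mu : {measure set T -> \bar R}) (Om : set T).

Definition Linf (f : T -> R) : R :=
  fine (ereal_inf [set y : \bar R | {ae mu, forall x, Om x -> ((`|f x|)%:E <= y)%E}]).

Definition in_Linf (f : T -> R) : Prop :=
  measurable_fun Om f /\ exists M : R, {ae mu, forall x, Om x -> `|f x| <= M}.

Definition L1norm (f : T -> R) : R := fine (\int[mu]_(x in Om) (`|f x|)%:E)%E.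

Definition L2norm (f : T -> R) : R :=
  Num.sqrt (fine (\int[mu]_(x in Om) ((f x) ^+ 2)%:E)%E).

Definition in_L2 (f : T -> R) : Prop :=
  measurable_fun Om f /\ (\int[mu]_(x in Om) ((f x) ^+ 2)%:E < +oo)%E.

Record pert := Pert { e_y : T -> R; e_J : T -> R; e_al : T -> R; e_be : T -> R }.

Definition in_E (e : pert) : Prop :=
  [/\ in_L2 (e_y e), in_L2 (e_J e), in_Linf (e_al e) & in_Linf (e_be e)].

Definition Edist (e e' : pert) : R :=
  L2norm (e_y e \- e_y e') + L2norm (e_J e \- e_J e')
  + Linf (e_al e \- e_al e') + Linf (e_be e \- e_be e').

Definition Uad (al be : T -> R) (e : pert) : set (T -> R) :=
  [set u | mu.-integrable Om (EFin \o u) /\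
     {ae mu, forall x, Om x -> al x + e_al e x <= u x <= be x + e_be e x}].

End Defs.

(* Let w be the perturbed optimal control and eps = ||e - ebar||_E.  Clamping the gap
   ubar - w at level eps gives k with |k| <= eps such that u_e = w + k is admissible
   for ebar and ubar - k is admissible for e.  Testing the perturbed variational
   inequality with ubar - k bounds the left-hand side below by a cross term of size
   ||phi_e - phibar||_oo eps |Om| plus J = int phibar (u_e - ubar).  The unperturbed
   inequality forces ubar onto the active bound wherever phibar <> 0, so
   phibar (u_e - ubar) = |phibar| |u_e - ubar|; with the measure bound on
   {|phibar| <= t} this gives J >= t ||u_e - ubar||_1 - C t^(1 + kappa) for all t > 0,
   and optimizing in t yields J >= kappa0 ||u_e - ubar||_1^(1 + 1/kappa).  Finally
   ||w - ubar||_1 <= ||u_e - ubar||_1 + eps |Om| transfers this growth to w at the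
   cost of a term of order eps^(1 + 1/kappa). *)

From HB Require Import structures.
From mathcomp Require Import all_boot all_order all_algebra.
From mathcomp Require Import all_classical all_reals all_analysis.
From mathcomp Require Import measurable_realfun lra.
Import Order.TTheory GRing.Theory Num.Theory.
Import numFieldNormedType.Exports.
Local Open Scope classical_set_scope.
Local Open Scope ring_scope.

Set Implicit Arguments.
Unset Strict Implicit.
Unset Printing Implicit Defensive.

Definition clamp (R : realDomainType) (c y : R) : R := Num.max (- c) (Num.min c y).

Section clamp.
Variable R : realFieldType.
Implicit Types a b c u v w y : R.

Lemma clamp_norm_le c y : 0 <= c -> `|clamp c y| <= c.
Proof.
move=> c0; rewrite /clamp ler_norml le_max lexx ge_max ge_min lexx andbT /=.
lra.
Qed.

Lemma clamp_box a b a' b' u w c :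
  a <= u <= b -> a' <= w <= b' -> `|a' - a| <= c -> `|b' - b| <= c ->
  a <= w + clamp c (u - w) <= b /\ a' <= u - clamp c (u - w) <= b'.
Proof.
move=> /andP[ua ub] /andP[wa wb]; rewrite !ler_norml => /andP[a1 a2] /andP[b1 b2].
rewrite /clamp; case: (leP c (u - w)) => h1;
  [case: (leP (- c) c) | case: (leP (- c) (u - w))] => h2;
  by split; apply/andP; split; lra.
Qed.

Lemma normrM_le_signed (p u v a b : R) : a <= v <= b ->
  (0 < p -> u = a) -> (p < 0 -> u = b) -> `|p| * `|v - u| <= p * (v - u).
Proof.
move=> /andP[va vb] pa pb; case: (ltgtP p 0) => p0.
- by rewrite (pb p0) ltr0_norm // ler0_norm ?subr_le0 //; lra.
- by rewrite (pa p0) gtr0_norm // ger0_norm ?subr_ge0.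
- by rewrite p0 normr0 !mul0r.
Qed.

End clamp.

Section powR_bounds.
Variable R : realType.

(* The choice t = (X / (2 C))^(1/kap) makes t * C * t^kap equal to t * X / 2. *)
Lemma powR_le_of_linear_lbounds (C kap X J : R) :
  0 < C -> 0 < kap -> 0 <= X -> 0 <= J ->
  (forall t, 0 < t -> t * X - t * C * powR t kap <= J) ->
  powR ((2 * C)^-1) kap^-1 / 2 * powR X (1 + kap^-1) <= J.
Proof.
move=> C0 kap0 X0 J0 HJ.
have [->|Xneq0] := eqVneq X 0.
  by rewrite powR0 ?mulr0 // gt_eqF // ltr_wpDr // invr_ge0 ltW.
have X0' : 0 < X by rewrite lt_neqAle eq_sym Xneq0 X0.
set s := X * (2 * C)^-1.
have s0 : 0 < s by rewrite mulr_gt0 // invr_gt0 mulr_gt0.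
set t := powR s kap^-1.
have t0 : 0 < t by rewrite powR_gt0.
have tkap : powR t kap = s by rewrite /t -powRrM mulVf ?gt_eqF // powRr1 // ltW.
have halve : t * X - t * C * s = t * X / 2.
  have CC : C * (2 * C)^-1 = 2^-1 by rewrite invfM mulrCA mulfV ?gt_eqF // mulr1.
  rewrite /s -(mulrA t C) (mulrCA C) CC; lra.
apply: le_trans (HJ t t0); rewrite tkap halve.
rewrite powRD; last by rewrite gt_eqF // ltr_wpDr // invr_ge0 ltW.
rewrite powRr1 // /t /s powRM // ?invr_ge0 ?mulr_ge0 ?(ltW C0) //; lra.
Qed.

Lemma powR_le_double_add (r X Z Y : R) : 0 <= r -> 0 <= X -> 0 <= Z -> 0 <= Y ->
  Y <= X + Z -> powR Y r <= powR (2 * X) r + powR (2 * Z) r.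
Proof.
move=> r0 X0 Z0 Y0 YXZ.
have [XZ|ZX] := leP Z X.
- apply: ler_wpDr (powR_ge0 _ _) _.
  apply: ge0_ler_powR; rewrite ?nnegrE ?mulr_ge0 //; lra.
- apply: ler_wpDl (powR_ge0 _ _) _.
  apply: ge0_ler_powR; rewrite ?nnegrE ?mulr_ge0 //; lra.
Qed.

End powR_bounds.

Section essential_bounds.
Context {d} {T : measurableType d} {R : realType}.
Variables (mu : {measure set T -> \bar R}) (Om : set T).
Implicit Types (f g h : T -> R) (c : R).

Lemma Linf_ge0 f : 0 <= Linf mu Om f.
Proof.
rewrite /Linf; set S := [set y | _].
case E : (ereal_inf S) => [r| |] //=; rewrite leNgt; apply/negP => r0.
have [y Sy y0] : exists2 y, S y & (y < 0)%E by apply/ereal_inf_lt; rewrite E lte_fin.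
have SNy : S -oo%E.
  by apply: filterS Sy => x Hx Ox; move: (le_lt_trans (Hx Ox) y0); rewrite lte_fin normr_lt0.
by move: (ereal_inf_lbound SNy); rewrite E leeNy_eq.
Qed.

Lemma ae_le_Linf f : in_Linf mu Om f ->
  {ae mu, forall x, Om x -> `|f x| <= Linf mu Om f}.
Proof.
move=> [_ [M HM]]; rewrite /Linf; set S := [set y | _].
have SM : S M%:E by apply: filterS HM => x Hx Ox; rewrite lee_fin Hx.
case E : (ereal_inf S) => [r| |] /=.
- have : {ae mu, forall x, forall n : nat, Om x -> `|f x| <= r + n.+1%:R^-1}.
    apply: ae_foralln => n.
    have n0 : 0 < n.+1%:R^-1 :> R by rewrite invr_gt0.
    have [|y Sy yr] := lb_ereal_inf_adherent n0 (_ : ereal_inf S \is a fin_num).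
      by rewrite E.
    apply: filterS Sy => x Hx Ox.
    by rewrite -lee_fin EFinD -E (le_trans (Hx Ox) (ltW yr)).
  apply: filterS => x Hx Ox; rewrite leNgt; apply/negP => /ltr_add_invr [n Hn].
  by move: (Hx n Ox); rewrite leNgt Hn.
- by move: (ereal_inf_lbound SM); rewrite E leye_eq.
- have [y Sy y0] : exists2 y, S y & (y < 0)%E by apply/ereal_inf_lt; rewrite E.
  by apply: filterS Sy => x Hx Ox; move: (le_lt_trans (Hx Ox) y0); rewrite lte_fin normr_lt0.
Qed.

Lemma ae_on_and (P Q : T -> Prop) :
  {ae mu, forall x, Om x -> P x} -> {ae mu, forall x, Om x -> Q x} ->
  {ae mu, forall x, Om x -> P x /\ Q x}.
Proof. by apply: filterS2 => x Px Qx Ox; split; [exact: Px | exact: Qx]. Qed.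

Lemma Linf_le f c : 0 <= c -> (forall x, Om x -> `|f x| <= c) -> Linf mu Om f <= c.
Proof.
move=> c0 fc; rewrite /Linf; set S := [set y | _].
have Sc : S c%:E by apply: aeW => x Ox; rewrite lee_fin fc.
by move: (ereal_inf_lbound Sc); case: (ereal_inf S) => [r| |] //=; rewrite lee_fin.
Qed.

Lemma in_Linf_cst c : in_Linf mu Om (fun=> c).
Proof. by split; [exact: measurable_cst | exists `|c|; apply: aeW]. Qed.

Lemma in_LinfD f g : in_Linf mu Om f -> in_Linf mu Om g ->
  in_Linf mu Om (fun x => f x + g x).
Proof.
move=> [mf [M HM]] [mg [N HN]]; split; first exact: measurable_funD.
exists (M + N); apply: filterS2 HM HN => x Hf Hg Ox.
by rewrite (le_trans (ler_normD _ _)) // lerD ?Hf ?Hg.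
Qed.

Lemma in_LinfN f : in_Linf mu Om f -> in_Linf mu Om (fun x => - f x).
Proof.
move=> [mf [M HM]]; split; first exact: measurable_funN.
by exists M; apply: filterS HM => x Hf Ox; rewrite normrN Hf.
Qed.

Lemma in_LinfB f g : in_Linf mu Om f -> in_Linf mu Om g ->
  in_Linf mu Om (fun x => f x - g x).
Proof. by move=> hf hg; apply: in_LinfD hf (in_LinfN hg). Qed.

Lemma in_LinfM f g : in_Linf mu Om f -> in_Linf mu Om g ->
  in_Linf mu Om (fun x => f x * g x).
Proof.
move=> [mf [M HM]] [mg [N HN]]; split; first exact: measurable_funM.
exists (`|M| * `|N|); apply: filterS2 HM HN => x Hf Hg Ox.
by rewrite normrM ler_pM // (le_trans _ (ler_norm _)) ?Hf ?Hg.
Qed.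

Lemma in_Linf_norm f : in_Linf mu Om f -> in_Linf mu Om (fun x => `|f x|).
Proof.
move=> [mf [M HM]]; split; first exact: measurableT_comp.
by exists M; apply: filterS HM => x Hf Ox; rewrite normr_id Hf.
Qed.

Lemma in_Linf_min f g : in_Linf mu Om f -> in_Linf mu Om g ->
  in_Linf mu Om (fun x => Num.min (f x) (g x)).
Proof.
move=> [mf [M HM]] [mg [N HN]]; split; first exact: measurable_minr.
exists (M + N); apply: filterS2 HM HN => x Hf Hg Ox.
move: (Hf Ox) (Hg Ox) (normr_ge0 (f x)) (normr_ge0 (g x)).
by case: (leP (f x) (g x)) => _; lra.
Qed.

Lemma in_Linf_clamp f c : 0 <= c -> measurable_fun Om f ->
  in_Linf mu Om (fun x => clamp c (f x)).
Proof.
move=> c0 mf; split; last by exists c; apply: aeW => x _; exact: clamp_norm_le.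
exact/measurable_maxr/measurable_minr.
Qed.

Lemma in_Linf_if (P : T -> bool) f g : measurable Om -> measurable_fun Om P ->
  in_Linf mu Om f -> in_Linf mu Om g ->
  in_Linf mu Om (fun x => if P x then f x else g x).
Proof.
move=> mOm mP [mf [M HM]] [mg [N HN]]; split.
  by apply: measurable_fun_if => //;
    [apply: measurable_funS mf | apply: measurable_funS mg] => //; exact: subIsetl.
exists (`|M| + `|N|); apply: filterS2 HM HN => x Hf Hg Ox.
move: (Hf Ox) (Hg Ox) (ler_norm M) (ler_norm N) (normr_ge0 M) (normr_ge0 N).
by case: (P x); lra.
Qed.

Lemma in_Linf_between f g h : measurable_fun Om f ->
  in_Linf mu Om g -> in_Linf mu Om h ->
  {ae mu, forall x, Om x -> g x <= f x <= h x} -> in_Linf mu Om f.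
Proof.
move=> mf [_ [M HM]] [_ [N HN]] gfh; split => //.
exists (M + N); apply: filterS3 HM HN gfh => x Hg Hh Hgfh Ox.
move: (Hg Ox) (Hh Ox) (Hgfh Ox); rewrite !real_ler_norml ?num_real //.
by move=> /andP[? ?] /andP[? ?] /andP[? ?]; apply/andP; split; lra.
Qed.

Lemma in_Linf_integrable f : measurable Om -> (mu Om < +oo)%E ->
  in_Linf mu Om f -> mu.-integrable Om (EFin \o f).
Proof.
move=> mOm finOm [mf [M HM]]; apply/integrableP; split; first exact/measurable_EFinP.
apply: le_lt_trans (_ : (`|M|%:E * mu Om < +oo)%E); last by rewrite lte_mul_pinfty.
apply: integral_le_bound => //; first exact/measurable_EFinP.
by apply: filterS HM => x Hf Ox; rewrite lee_fin (le_trans (Hf Ox)) // ler_norm.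
Qed.

End essential_bounds.

Section bounded_integrals.
Context {d} {T : measurableType d} {R : realType}.
Variables (mu : {measure set T -> \bar R}) (Om : set T).
Hypotheses (mOm : measurable Om) (finOm : (mu Om < +oo)%E).
Implicit Types (f g p : T -> R) (c : R).

Let integrable f := in_Linf_integrable mOm finOm (f := f).

Lemma le_Rintegral_ae f g : in_Linf mu Om f -> in_Linf mu Om g ->
  {ae mu, forall x, Om x -> f x <= g x} -> Rintegral mu Om f <= Rintegral mu Om g.
Proof.
move=> hf hg fg; have hfg := in_Linf_min hf hg.
have -> : Rintegral mu Om f = Rintegral mu Om (fun x => Num.min (f x) (g x)).
  rewrite /Rintegral (ae_eq_integral (EFin \o (fun x => Num.min (f x) (g x)))) //.
  - exact/measurable_EFinP/hf.1.
  - exact/measurable_EFinP/hfg.1.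
  - by apply: filterS fg => x fgx Ox; rewrite /= min_l ?fgx.
apply: le_Rintegral => //; [exact: integrable | exact: integrable |].
by move=> x _; rewrite ge_min lexx orbT.
Qed.

Lemma nonpos_Rintegral_ge0_ae_eq0 f : in_Linf mu Om f ->
  {ae mu, forall x, Om x -> f x <= 0} -> 0 <= Rintegral mu Om f ->
  {ae mu, forall x, Om x -> f x = 0}.
Proof.
move=> hf fle0 intf0.
have hnf := in_Linf_norm hf.
have normf0 : Rintegral mu Om (fun x => `|f x|) = 0.
  apply/eqP; rewrite eq_le Rintegral_ge0 // andbT.
  apply: le_trans (_ : Rintegral mu Om (fun x => -1 * f x) <= 0).
    apply: le_Rintegral_ae hnf (in_LinfM (in_Linf_cst _ _ _) hf) _.
    by apply: filterS fle0 => x fx0 Ox; rewrite mulN1r ler0_norm ?fx0.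
  by rewrite RintegralZl ?integrable // mulN1r oppr_le0.
have : (\int[mu]_(x in Om) `|(EFin \o f) x| = 0)%E.
  have /(integrable_fin_num mOm) fin := integrable hnf.
  by rewrite -(fineK fin) [fine _]normf0.
have mF : measurable_fun Om (EFin \o f) by exact/measurable_EFinP/hf.1.
move/(ae_eq_integral_abs mu mOm mF).
by apply: filterS => x fx0 Ox; case: (fx0 Ox).
Qed.

Lemma Rintegral_mul_ge_Linf f g c : in_Linf mu Om f -> in_Linf mu Om g ->
  (forall x, Om x -> `|g x| <= c) ->
  - (Linf mu Om f * c) * fine (mu Om) <= Rintegral mu Om (fun x => f x * g x).
Proof.
move=> hf hg gc; rewrite -Rintegral_cst //.
apply: le_Rintegral_ae (in_Linf_cst _ _ _) (in_LinfM hf hg) _.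
apply: filterS (ae_le_Linf hf) => x fx Ox.
have : `|f x * g x| <= Linf mu Om f * c by rewrite normrM ler_pM ?fx ?gc.
by rewrite ler_norml => /andP[].
Qed.

Lemma L1norm_le_add f g c : in_Linf mu Om f -> in_Linf mu Om g ->
  (forall x, Om x -> `|f x - g x| <= c) ->
  L1norm mu Om f <= L1norm mu Om g + c * fine (mu Om).
Proof.
move=> hf hg fgc; rewrite -Rintegral_cst // -RintegralD ?integrable //;
  [| exact: in_Linf_norm | exact: in_Linf_cst].
apply: le_Rintegral_ae (in_Linf_norm hf) (in_LinfD (in_Linf_norm hg) (in_Linf_cst _ _ _)) _.
apply: aeW => x Ox; rewrite -lerBlDl (le_trans (lerB_dist _ _)) ?fgc //.
Qed.

Lemma Rintegral_signed_lbound p g (t M B : R) :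
  in_Linf mu Om p -> in_Linf mu Om g -> 0 < t -> 0 <= M ->
  {ae mu, forall x, Om x -> `|p x| * `|g x| <= p x * g x /\ `|g x| <= M} ->
  (mu [set x | Om x /\ (`|p x| <= t)%R] <= B%:E)%E ->
  t * L1norm mu Om g - t * M * B <= Rintegral mu Om (fun x => p x * g x).
Proof.
move=> hp hg t0 M0 pg muA; set A := [set x | _] in muA.
have mA : measurable A.
  have mpt : measurable_fun Om (fun x => `|p x| <= t).
    exact/(measurable_fun_ler _ (measurable_cst t))/measurableT_comp/hp.1.
  rewrite (_ : A = Om `&` ((fun x => `|p x| <= t) @^-1` [set true])); first exact: mpt.
  by apply/seteqP; split => x /= [].
have hA : in_Linf mu Om (fun x => \1_A x).
  split; first exact: measurable_indic.
  by exists 1; apply: aeW => x _; rewrite indicE; case: (x \in A); rewrite ?normr1 ?normr0.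
have hlow := in_LinfB (in_LinfM (in_Linf_cst mu Om t) (in_Linf_norm hg))
                      (in_LinfM (in_Linf_cst mu Om (t * M)) hA).
have fin_muA : mu A \is a fin_num by rewrite ge0_fin_numE // (le_lt_trans muA) // ltry.
have intA : Rintegral mu Om (fun x => \1_A x) <= B.
  rewrite /Rintegral integral_indic // setIidl; last by move=> x [].
  by rewrite -lee_fin fineK.
apply: le_trans (le_Rintegral_ae hlow (in_LinfM hp hg) _).
  rewrite RintegralB ?integrable //; last 2 first.
  - exact: in_LinfM (in_Linf_cst _ _ _) (in_Linf_norm hg).
  - exact: in_LinfM (in_Linf_cst _ _ _) hA.
  rewrite (RintegralZl _ mOm (integrable (in_Linf_norm hg))) RintegralZl ?integrable //.
  by rewrite lerD2l lerN2 ler_wpM2l // mulr_ge0 // ltW.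
(* Off the level set A, [p g = |p| |g| >= t |g|]; on it, [t M] dominates [t |g|]. *)
apply: filterS pg => x pgx Ox; have [pgx' gM] := pgx Ox.
rewrite indicE; case: (boolP (x \in A)) => [_|xA].
- rewrite mulr1 (le_trans _ pgx') // (le_trans _ (mulr_ge0 (normr_ge0 _) (normr_ge0 _))) //.
  by rewrite subr_le0 ler_pM2l.
- rewrite mulr0 subr0 (le_trans _ pgx') // ler_wpM2r // ltW // ltNge.
  by apply: contra xA => ptx; apply/mem_set.
Qed.

(* Test the inequality with [z] equal to [a] where [p > 0], to [b] where [p < 0], and
   to [u] elsewhere: then [p (z - u) <= 0] has a nonnegative integral, so it vanishes. *)
Lemma variational_inequality_ae a b u p :
  in_Linf mu Om a -> in_Linf mu Om b -> in_Linf mu Om p -> measurable_fun Om u ->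
  {ae mu, forall x, Om x -> a x <= u x <= b x} ->
  (forall z, in_Linf mu Om z -> {ae mu, forall x, Om x -> a x <= z x <= b x} ->
     0 <= Rintegral mu Om (fun x => p x * (z x - u x))) ->
  {ae mu, forall x, Om x -> (0 < p x -> u x = a x) /\ (p x < 0 -> u x = b x)}.
Proof.
move=> ha hb hp mu_ abu VI.
have hu := in_Linf_between mu_ ha hb abu.
have mpos : measurable_fun Om (fun x => 0 < p x).
  exact: measurable_fun_ltr (measurable_cst (0 : R)) hp.1.
have mneg : measurable_fun Om (fun x => p x < 0).
  exact: measurable_fun_ltr hp.1 (measurable_cst (0 : R)).
pose z x := if 0 < p x then a x else if p x < 0 then b x else u x.
have hz : in_Linf mu Om z by apply: in_Linf_if => //; apply: in_Linf_if.
have abz : {ae mu, forall x, Om x -> a x <= z x <= b x}.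
  apply: filterS abu => x abux Ox; have /andP[aux uxb] := abux Ox.
  have ab := le_trans aux uxb.
  by rewrite /z; case: ifP => _; [|case: ifP => _]; rewrite ?lexx ?ab ?aux.
have pz_le0 : {ae mu, forall x, Om x -> p x * (z x - u x) <= 0}.
  apply: filterS abu => x abux Ox; have /andP[aux uxb] := abux Ox.
  rewrite /z; case: ifP => ppos; first by rewrite pmulr_rle0 // subr_le0.
  case: ifP => pneg; last by rewrite subrr mulr0.
  by rewrite nmulr_rle0 // subr_ge0.
have := nonpos_Rintegral_ge0_ae_eq0 (in_LinfM hp (in_LinfB hz hu)) pz_le0 (VI z hz abz).
apply: filterS => x pz0 Ox; split => [ppos | pneg]; move/eqP: (pz0 Ox).
- by rewrite /z ppos mulf_eq0 gt_eqF //= subr_eq0 => /eqP.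
- by rewrite /z ltNge (ltW pneg) pneg mulf_eq0 lt_eqF //= subr_eq0 => /eqP.
Qed.

End bounded_integrals.

Section perturbations.
Context {d} {T : measurableType d} {R : realType}.
Variables (mu : {measure set T -> \bar R}) (Om : set T).
Implicit Types e : pert T R.

Lemma L2norm_ge0 (f : T -> R) : 0 <= L2norm mu Om f.
Proof. exact: sqrtr_ge0. Qed.

Lemma Edist_ge0 e (e' : pert T R) : 0 <= Edist mu Om e e'.
Proof. by rewrite /Edist !addr_ge0 ?L2norm_ge0 ?Linf_ge0. Qed.

Lemma ae_le_Edist e (e' : pert T R) : in_E mu Om e -> in_E mu Om e' ->
  {ae mu, forall x, Om x -> `|e_al e x - e_al e' x| <= Edist mu Om e e' /\
                           `|e_be e x - e_be e' x| <= Edist mu Om e e'}.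
Proof.
move=> [_ _ hal hbe] [_ _ hal' hbe'].
have := L2norm_ge0 (e_y e \- e_y e'); have := L2norm_ge0 (e_J e \- e_J e').
have := Linf_ge0 mu Om (e_al e \- e_al e'); have := Linf_ge0 mu Om (e_be e \- e_be e').
move=> *; apply: filterS2 (ae_le_Linf (in_LinfB hal hal')) (ae_le_Linf (in_LinfB hbe hbe')).
by move=> x al be Ox; move: (al Ox) (be Ox); rewrite /Edist; split; lra.
Qed.

Lemma Uad_in_Linf alpha beta e u : in_Linf mu Om alpha -> in_Linf mu Om beta ->
  in_E mu Om e -> Uad mu Om alpha beta e u -> in_Linf mu Om u.
Proof.
move=> hal hbe [_ _ heal hebe] [/integrableP[/measurable_EFinP mu_ _] abu].
exact: in_Linf_between mu_ (in_LinfD hal heal) (in_LinfD hbe hebe) abu.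
Qed.

End perturbations.

Section perturbed_estimate.
Context {d} {T : measurableType d} {R : realType}.
Variables (mu : {measure set T -> \bar R}) (Om : set T).
Variables (alpha beta : T -> R) (phi : (T -> R) -> pert T R -> T -> R).
Variables (ebar : pert T R) (ubar : T -> R) (K kap : R).
Hypotheses (mOm : measurable Om) (finOm : (mu Om < +oo)%E).
Hypotheses (hal : in_Linf mu Om alpha) (hbe : in_Linf mu Om beta).
Hypotheses (hEbar : in_E mu Om ebar) (hUbar : Uad mu Om alpha beta ebar ubar).
Hypothesis hphibar : in_Linf mu Om (phi ubar ebar).
Hypothesis VIbar : forall u, Uad mu Om alpha beta ebar u ->
  0 <= Rintegral mu Om (fun x => phi ubar ebar x * (u x - ubar x)).
Hypotheses (K0 : 0 < K) (kap0 : 0 < kap).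
Hypothesis growth : forall t : R, 0 < t ->
  (mu [set x | Om x /\ (`|phi ubar ebar x| <= t)%R] <= (K * powR t kap)%:E)%E.

Let lo x := alpha x + e_al ebar x.
Let hi x := beta x + e_be ebar x.
Let r := 1 + kap^-1.
Let integrable f := in_Linf_integrable mOm finOm (f := f).

Definition box_size := Linf mu Om lo + Linf mu Om hi + 1.

Definition growth_const := powR ((2 * (box_size * K))^-1) kap^-1 / 2.

Definition estimate_kappa := growth_const / (2 * powR 2 r).

(* Absorbs |Om| from the cross term of [perturbed_gap_ge] and the [eps^(1/kap) eps]
   remainder of [growth_transfer]. *)
Definition estimate_const := fine (mu Om) + estimate_kappa * powR (2 * fine (mu Om)) r + 1.

Lemma box_size_gt0 : 0 < box_size.
Proof. by rewrite /box_size ltr_pwDr // addr_ge0 ?Linf_ge0. Qed.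

Lemma estimate_kappa_gt0 : 0 < estimate_kappa.
Proof.
have b0 := box_size_gt0.
by rewrite /estimate_kappa /growth_const !divr_gt0 ?powR_gt0 ?mulr_gt0 ?invr_gt0 ?mulr_gt0.
Qed.

Lemma estimate_const_gt0 : 0 < estimate_const.
Proof.
rewrite /estimate_const ltr_pwDr // addr_ge0 ?fine_ge0 // mulr_ge0 ?powR_ge0 //.
exact/ltW/estimate_kappa_gt0.
Qed.

Lemma growth_at_ubar v : in_Linf mu Om v ->
  {ae mu, forall x, Om x -> lo x <= v x <= hi x} ->
  growth_const * powR (L1norm mu Om (v \- ubar)) r
    <= Rintegral mu Om (fun x => phi ubar ebar x * (v x - ubar x)).
Proof.
move=> hv lohi.
have [_ _ heal hebe] := hEbar.
have [hlo hhi] := (in_LinfD hal heal, in_LinfD hbe hebe).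
have hu := Uad_in_Linf hal hbe hEbar hUbar.
have signs := variational_inequality_ae mOm finOm hlo hhi hphibar hu.1 hUbar.2
  (fun z hz loz => VIbar (conj (integrable hz) loz)).
have J0 := VIbar (conj (integrable hv) lohi).
have X0 : 0 <= L1norm mu Om (v \- ubar) by apply: Rintegral_ge0.
rewrite /growth_const /r.
apply: powR_le_of_linear_lbounds (mulr_gt0 box_size_gt0 K0) kap0 X0 J0 _ => t t0.
have := Rintegral_signed_lbound mOm finOm hphibar (in_LinfB hv hu) t0 (ltW box_size_gt0) _ (growth t0).
rewrite !mulrA; apply.
have := ae_on_and signs (ae_on_and (ae_on_and lohi hUbar.2)
                                   (ae_on_and (ae_le_Linf hlo) (ae_le_Linf hhi))).
apply: filterS => x Hx Ox.
have [[sg_lo sg_hi] [[lov uhi] [nlo nhi]]] := Hx Ox.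
split; first exact: normrM_le_signed lov sg_lo sg_hi.
move: lov uhi nlo nhi; rewrite /box_size /lo /hi => /andP[? ?] /andP[? ?].
rewrite !ler_norml => /andP[? ?] /andP[? ?]; apply/andP; split; lra.
Qed.

Definition clamped_gap (e : pert T R) (w : T -> R) x :=
  clamp (Edist mu Om e ebar) (ubar x - w x).

Lemma clamped_gap_in_Linf e w : in_E mu Om e -> Uad mu Om alpha beta e w ->
  in_Linf mu Om (clamped_gap e w).
Proof.
move=> he hw; apply: in_Linf_clamp (Edist_ge0 _ _ _ _) _.
exact: (in_LinfB (Uad_in_Linf hal hbe hEbar hUbar) (Uad_in_Linf hal hbe he hw)).1.
Qed.

Lemma clamped_controls_admissible e w :
  in_E mu Om e -> Uad mu Om alpha beta e w ->
  Uad mu Om alpha beta ebar (fun x => w x + clamped_gap e w x) /\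
  Uad mu Om alpha beta e (fun x => ubar x - clamped_gap e w x).
Proof.
move=> he hw; have hk := clamped_gap_in_Linf he hw; set k := clamped_gap e w in hk *.
have [hw' hu] := (Uad_in_Linf hal hbe he hw, Uad_in_Linf hal hbe hEbar hUbar).
have shift (f : T -> R) x p q : (f x + p) - (f x + q) = p - q.
  by rewrite opprD addrACA subrr add0r.
have boxes : {ae mu, forall x, Om x ->
    (lo x <= w x + k x <= hi x) /\
    (alpha x + e_al e x <= ubar x - k x <= beta x + e_be e x)}.
  apply: filterS (ae_on_and hUbar.2 (ae_on_and hw.2 (ae_le_Edist he hEbar))).
  move=> x Hx Ox; have [ubox [wbox [dal dbe]]] := Hx Ox.
  by apply: clamp_box ubox wbox _ _; rewrite shift.
split; split.
- exact/integrable/in_LinfD.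
- by apply: filterS boxes => x Hx Ox; case: (Hx Ox).
- exact/integrable/in_LinfB.
- by apply: filterS boxes => x Hx Ox; case: (Hx Ox).
Qed.

(* Test the perturbed inequality with [ubar - k] and split [ubar - w] as
   [(ubar - k - w) + k]: the first part is nonnegative, the second is small. *)
Lemma perturbed_gap_ge e w :
  in_E mu Om e -> Uad mu Om alpha beta e w -> in_Linf mu Om (phi w e) ->
  (forall u, Uad mu Om alpha beta e u ->
     0 <= Rintegral mu Om (fun x => phi w e x * (u x - w x))) ->
  - (Linf mu Om (phi w e \- phi ubar ebar) * Edist mu Om e ebar) * fine (mu Om)
  + Rintegral mu Om (fun x => phi ubar ebar x * ((w x + clamped_gap e w x) - ubar x))
  <= Rintegral mu Om (fun x => (phi w e x - phi ubar ebar x) * (ubar x - w x)).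
Proof.
move=> he hw hphi VI.
have [_ hz_ad] := clamped_controls_admissible he hw.
have hk := clamped_gap_in_Linf he hw; set k := clamped_gap e w in hk hz_ad *.
have [hw' hu] := (Uad_in_Linf hal hbe he hw, Uad_in_Linf hal hbe hEbar hUbar).
have keps x : Om x -> `|k x| <= Edist mu Om e ebar.
  by move=> _; apply/clamp_norm_le/Edist_ge0.
have i1 := in_LinfM hphi (in_LinfB (in_LinfB hu hk) hw').
have i2 := in_LinfM (in_LinfB hphi hphibar) hk.
have i3 := in_LinfM hphibar (in_LinfB (in_LinfD hw' hk) hu).
have -> : Rintegral mu Om (fun x => (phi w e x - phi ubar ebar x) * (ubar x - w x)) =
    Rintegral mu Om (fun x => phi w e x * ((ubar x - k x) - w x))
    + Rintegral mu Om (fun x => (phi w e x - phi ubar ebar x) * k x)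
    + Rintegral mu Om (fun x => phi ubar ebar x * ((w x + k x) - ubar x)).
  rewrite -!RintegralD ?integrable //; last exact: in_LinfD i1 i2.
  by apply: eq_Rintegral => x _; lra.
have := VI _ hz_ad.
have := Rintegral_mul_ge_Linf mOm finOm (in_LinfB hphi hphibar) hk keps.
lra.
Qed.

(* [Y <= 2 max(X, eps |Om|)], and the exponent [r] splits [eps^r] as [eps^(1/kap) eps]. *)
Lemma growth_transfer (X Y J eps : R) : 0 <= X -> 0 <= Y -> 0 <= eps ->
  growth_const * powR X r <= J -> Y <= X + eps * fine (mu Om) ->
  estimate_kappa * powR Y r
    <= J / 2 + estimate_kappa * powR (2 * fine (mu Om)) r * (powR eps kap^-1 * eps).
Proof.
move=> X0 Y0 eps0 grow YX; have m0 : 0 <= fine (mu Om) by rewrite fine_ge0.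
have r_gt0 : 0 < r by rewrite ltr_wpDr ?invr_ge0 ?ltW.
have split_Y := powR_le_double_add (ltW r_gt0) X0 (mulr_ge0 eps0 m0) Y0 YX.
have kappa2 : estimate_kappa * powR 2 r = growth_const / 2.
  by rewrite /estimate_kappa invfM mulrA -mulrA [_^-1 * _]mulrC mulfV ?mulr1.
have Peps : powR eps r = powR eps kap^-1 * eps.
  rewrite powRD; last by rewrite -/r (gt_eqF r_gt0).
  by rewrite powRr1 // mulrC.
apply: le_trans (ler_wpM2l (ltW estimate_kappa_gt0) split_Y) _.
rewrite mulrDr powRM // [estimate_kappa * (_ * _)]mulrA kappa2.
by rewrite mulrCA powRM ?mulr_ge0 // Peps; lra.
Qed.

Lemma perturbed_growth_estimate e w :
  in_E mu Om e -> Uad mu Om alpha beta e w -> in_Linf mu Om (phi w e) ->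
  (forall u, Uad mu Om alpha beta e u ->
     0 <= Rintegral mu Om (fun x => phi w e x * (u x - w x))) ->
  Rintegral mu Om (fun x => (phi w e x - phi ubar ebar x) * (ubar x - w x))
  >= estimate_kappa * powR (L1norm mu Om (w \- ubar)) r
     + 2^-1 * Rintegral mu Om
                (fun x => phi ubar ebar x * ((w x + clamped_gap e w x) - ubar x))
     - estimate_const * (powR (Edist mu Om e ebar) kap^-1
                         + Linf mu Om (phi w e \- phi ubar ebar)
                         + L1norm mu Om (w \- ubar)) * Edist mu Om e ebar.
Proof.
move=> he hw hphi VI.
have gap_ge := perturbed_gap_ge he hw hphi VI.
have [hv_ad _] := clamped_controls_admissible he hw.
have hk := clamped_gap_in_Linf he hw; set k := clamped_gap e w in hk hv_ad gap_ge *.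
have [hw' hu] := (Uad_in_Linf hal hbe he hw, Uad_in_Linf hal hbe hEbar hUbar).
have hv := in_LinfD hw' hk.
set eps := Edist mu Om e ebar in gap_ge *; set m := fine (mu Om) in gap_ge *.
have eps0 : 0 <= eps := Edist_ge0 _ _ _ _.
have YX : L1norm mu Om (w \- ubar) <= L1norm mu Om (fun x => w x + k x - ubar x) + eps * m.
  apply: (L1norm_le_add mOm finOm (in_LinfB hw' hu) (in_LinfB hv hu) (c := eps)) => x _.
  have -> : w x - ubar x - (w x + k x - ubar x) = - k x by lra.
  by rewrite normrN; apply/clamp_norm_le/Edist_ge0.
have X0 : 0 <= L1norm mu Om (fun x => w x + k x - ubar x) by apply: Rintegral_ge0.
have Y0 : 0 <= L1norm mu Om (w \- ubar) by apply: Rintegral_ge0.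
have := growth_transfer X0 Y0 eps0 (growth_at_ubar hv hv_ad.2) YX.
have m0 : 0 <= m by exact: fine_ge0.
have := mulr_ge0 (addr_ge0 m0 ler01) (mulr_ge0 (powR_ge0 eps kap^-1) eps0).
have := mulr_ge0 (addr_ge0 (mulr_ge0 (ltW estimate_kappa_gt0) (powR_ge0 (2 * m) r)) ler01)
                 (mulr_ge0 (Linf_ge0 mu Om (phi w e \- phi ubar ebar)) eps0).
have := mulr_ge0 (ltW estimate_const_gt0) (mulr_ge0 Y0 eps0).
rewrite /estimate_const -/m.
lra.
Qed.

End perturbed_estimate.

Theorem lemma4p13 (d : measure_display) (T : measurableType d) (R : realType)
  (mu : {measure set T -> \bar R}) (Om : set T)
  (alpha beta : T -> R)
  (phi : (T -> R) -> pert T R -> T -> R)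
  (ebar : pert T R) (ubar : T -> R) (K varkappa sigma eta : R) :
  measurable Om -> (mu Om < +oo)%E ->
  in_Linf mu Om alpha -> in_Linf mu Om beta ->
  {ae mu, forall x, Om x -> alpha x <= beta x} ->
  in_E mu Om ebar ->
  (* (A4) at ubar *)
  Uad mu Om alpha beta ebar ubar ->
  in_Linf mu Om (phi ubar ebar) ->
  (forall u, Uad mu Om alpha beta ebar u ->
     0 <= Rintegral mu Om (fun x => phi ubar ebar x * (u x - ubar x))) ->
  0 < K -> 0 < varkappa ->
  (forall eps : R, 0 < eps ->
     (mu [set x | Om x /\ (`|phi ubar ebar x| <= eps)%R] <= (K * powR eps varkappa)%:E)%E) ->
  (* box width *)
  0 < sigma ->
  {ae mu, forall x, Om x ->
     sigma <= beta x + e_be ebar x - (alpha x + e_al ebar x)} ->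
  0 < eta -> eta < sigma / 4 ->
  exists c kappa' : R, 0 < c /\ 0 < kappa' /\
  forall (e : pert T R) (ue_bar : T -> R),
    in_E mu Om e -> Edist mu Om e ebar < eta ->
    Uad mu Om alpha beta e ue_bar ->
    in_Linf mu Om (phi ue_bar e) ->
    (forall u, Uad mu Om alpha beta e u ->
       0 <= Rintegral mu Om (fun x => phi ue_bar e x * (u x - ue_bar x))) ->
    exists ue : T -> R,
      Uad mu Om alpha beta ebar ue /\
      Linf mu Om (ue_bar \- ue) <= Edist mu Om e ebar /\
      Rintegral mu Om (fun x => (phi ue_bar e x - phi ubar ebar x) * (ubar x - ue_bar x))
      >= kappa' * powR (L1norm mu Om (ue_bar \- ubar)) (1 + varkappa^-1)
         + 2^-1 * Rintegral mu Om (fun x => phi ubar ebar x * (ue x - ubar x))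
         - c * (powR (Edist mu Om e ebar) (varkappa^-1)
                + Linf mu Om (phi ue_bar e \- phi ubar ebar)
                + L1norm mu Om (ue_bar \- ubar)) * Edist mu Om e ebar.
Proof.
move=> mOm finOm hal hbe _ hEbar hUbar hphibar VIbar K0 kap0 growth _ _ _ _.
exists (estimate_const mu Om alpha beta ebar K varkappa),
       (estimate_kappa mu Om alpha beta ebar K varkappa).
split; first exact: estimate_const_gt0.
split; first exact: estimate_kappa_gt0.
move=> e w he _ hw hphi VI.
exists (fun x => w x + clamped_gap mu Om ebar ubar e w x); split.
  exact: (clamped_controls_admissible mOm finOm hal hbe hEbar hUbar he hw).1.
split; last exact: perturbed_growth_estimate.
apply: Linf_le (Edist_ge0 _ _ _ _) _ => x _ /=.
by rewrite opprD addrA subrr add0r normrN clamp_norm_le ?Edist_ge0.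
Qed.
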